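(* Let $h>0$, $r_0>0$, $a_1>|a_2|$, and let $A,B,c_0,C_0$ be as in the context. Fix $\rho_0>0$ and $\beta\in\big(0,\frac{h^2+h\sqrt{h^2+r_0^2}}{r_0^2+h^2+h\sqrt{h^2+r_0^2}}\big)$ (note this ratio equals $c_0/C_0$). For $n\in\mathbb N$ let $P_1^0,P_2^0\in\mathbb R^2$ (possibly depending on $n$) satisfy $|P_1^0-P_2^0|=4\rho_0/n$, put $\rho=\beta\rho_0/n$, let $x(t)$ be the solution of $\dot x=\nabla^\perp\mathcal H(x)$ with $x(0)=DT(x_0)(P_1^0-P_2^0)$, let $E=\mathcal H(x(0))$, and $C_E=\exp\big(\frac{2E}{(a_1+a_2)A}\big)$. Then for every $k\in\mathbb N$ there exists $N_0$ such that for all $n>N_0$: $C_E<C^*$, the solution $x(t)$ is periodic with some period $T_E>0$, and with $T=(k+1)T_E$, $$\min_{t\in[0,T]}|DT(x_0)^{-1}x(t)|\ \ge\ 4\rho.$$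
   Context: Let $g(s)=\frac{1}{2(h\sqrt{s+h^2}+h^2)}$, $\tau(s)=\exp(\int_0^sg(z)dz)$, $T(x)=\tau(|x|^2)x$ for $x\in\mathbb R^2$, $x_0=(r_0,0)$, so $DT(x_0)=\tau(r_0^2)\,\mathrm{diag}\big(1+\frac{r_0^2}{h^2+h\sqrt{h^2+r_0^2}},\,1\big)$. Let $c_0=\tau(r_0^2)$ and $C_0=\tau(r_0^2)\big(1+\frac{r_0^2}{h^2+h\sqrt{h^2+r_0^2}}\big)$. Let $A=\frac{\sqrt{h^2+r_0^2}\,(r_0^2+h^2+h\sqrt{h^2+r_0^2})}{2\pi h\,(h^2+h\sqrt{h^2+r_0^2})}$ and $B=\frac{\tau(r_0^2)r_0}{4\pi h\sqrt{h^2+r_0^2}}$. For two points $\tilde P_1,\tilde P_2$ solving $\dot{\tilde P}_1=Aa_2\frac{(\tilde P_1-\tilde P_2)^\perp}{|\tilde P_1-\tilde P_2|^2}-a_1B(0,1)^T$, $\dot{\tilde P}_2=Aa_1\frac{(\tilde P_2-\tilde P_1)^\perp}{|\tilde P_1-\tilde P_2|^2}-a_2B(0,1)^T$ (with $a^\perp=(-a_2,a_1)$), the difference $x=\tilde P_1-\tilde P_2$ solves the Hamiltonian system $\dot x=\nabla^\perp\mathcal H(x)$ with $\mathcal H(x)=(a_1+a_2)A\ln|x|-(a_1-a_2)Bx_1$, $x=(x_1,x_2)$. Let $a'=\frac{(a_1+a_2)A}{2(a_1-a_2)B}$, so $\mathcal H$ has a unique critical point $x^*=(2a',0)$, and $C^*=(2a'/e)^2$.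 The relation $P_1(t)-P_2(t)=DT(x_0)^{-1}x(t)$ holds. *)

From Stdlib Require Import Reals Lra.
From Coquelicot Require Import Coquelicot.
Open Scope R_scope.

Definition g_fun (h s : R) : R := / (2 * (h * sqrt (s + h ^ 2) + h ^ 2)).

Definition tau (h s : R) : R := exp (RInt (g_fun h) 0 s).

Definition c0 (h r0 : R) : R := tau h (r0 ^ 2).
Definition C0 (h r0 : R) : R :=
  tau h (r0 ^ 2) * (1 + r0 ^ 2 / (h ^ 2 + h * sqrt (h ^ 2 + r0 ^ 2))).

Definition A_const (h r0 : R) : R :=
  sqrt (h ^ 2 + r0 ^ 2) * (r0 ^ 2 + h ^ 2 + h * sqrt (h ^ 2 + r0 ^ 2))
  / (2 * PI * h * (h ^ 2 + h * sqrt (h ^ 2 + r0 ^ 2))).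

Definition B_const (h r0 : R) : R :=
  tau h (r0 ^ 2) * r0 / (4 * PI * h * sqrt (h ^ 2 + r0 ^ 2)).

Definition norm2 (x : R * R) : R := sqrt (fst x ^ 2 + snd x ^ 2).

Definition Ham (h r0 a1 a2 : R) (x : R * R) : R :=
  (a1 + a2) * A_const h r0 * ln (norm2 x) - (a1 - a2) * B_const h r0 * fst x.

(* x' = grad^perp H(x) = (- d2 H, d1 H), with d1 H = (a1+a2)A x1/|x|^2 - (a1-a2)B,
   d2 H = (a1+a2)A x2/|x|^2.  A solution on the whole real line avoiding 0. *)
Definition is_ham_solution (h r0 a1 a2 : R) (x : R -> R * R) : Prop :=
  forall t : R,
    x t <> (0, 0) /\
    is_derive (fun s => fst (x s)) t
      (- ((a1 + a2) * A_const h r0 * snd (x t) / (norm2 (x t)) ^ 2)) /\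
    is_derive (fun s => snd (x s)) t
      ((a1 + a2) * A_const h r0 * fst (x t) / (norm2 (x t)) ^ 2
       - (a1 - a2) * B_const h r0).

Definition a_prime (h r0 a1 a2 : R) : R :=
  (a1 + a2) * A_const h r0 / (2 * (a1 - a2) * B_const h r0).
Definition C_star (h r0 a1 a2 : R) : R := (2 * a_prime h r0 a1 a2 / exp 1) ^ 2.

Definition DT0 (h r0 : R) (v : R * R) : R * R := (C0 h r0 * fst v, c0 h r0 * snd v).
Definition DT0inv (h r0 : R) (v : R * R) : R * R := (fst v / C0 h r0, snd v / c0 h r0).

(** The conserved quantity [c ln |x| - d x1] of the flow, with [c = (a1 + a2) A] and
    [d = (a1 - a2) B], confines a solution to a level curve. For a small initial separation this
    curve is a closed loop [r = s exp w], [w exp (-w) = (d s / c) cos th], around the origin.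
    Parametrising it by the angle, with [dt / dth = r^2 / (c (1 - w))], gives an explicit
    periodic solution; a Gronwall argument shows it is the only one. On the loop
    [r >= s exp (- d s e / c)], and [s] is within a factor [exp (d |x0| / c)] of [|x0|], so for
    large [n] the orbit stays above any fraction [gam < 1] of [|x0|]. With [gam = beta C0 / c0]
    and [|DT(x0)^-1 v| >= |v| / C0] this is the bound [4 rho], at all times. *)

From Stdlib Require Import Reals Lra Psatz ClassicalEpsilon Ranalysis5.
From Coquelicot Require Import Coquelicot.
Open Scope R_scope.

Lemma is_derive_continuity_pt f x l : is_derive f x l -> continuity_pt f x.
Proof.
  intros H. apply is_derive_Reals in H.
  apply derivable_continuous_pt. exists l. exact H.
Qed.

Lemma is_derive_MVT f df a b : (forall x, is_derive f x (df x)) ->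
  exists c, Rmin a b <= c <= Rmax a b /\ f b - f a = df c * (b - a).
Proof.
  intros H. apply MVT_gen; intros.
  - apply H.
  - eapply is_derive_continuity_pt. apply H.
Qed.

Lemma is_derive_nonpos_decreasing f df : (forall x, is_derive f x (df x)) ->
  (forall x, df x <= 0) -> forall a b, a <= b -> f b <= f a.
Proof.
  intros H Hn a b Hab. destruct (is_derive_MVT f df a b H) as [c [_ Hc]].
  specialize (Hn c). nra.
Qed.

Lemma is_derive_0_constant f : (forall x, is_derive f x 0) -> forall a b, f b = f a.
Proof.
  intros H a b. destruct (is_derive_MVT f (fun _ => 0) a b H) as [c [_ Hc]]. lra.
Qed.

Lemma exp_le_compat a b : a <= b -> exp a <= exp b.
Proof. intros [H|H]; [left; apply exp_increasing, H| rewrite H; lra]. Qed.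

Lemma is_derive_eq (f : R -> R) (x l l' : R) :
  is_derive f x l -> l = l' -> is_derive f x l'.
Proof. intros H ->; exact H. Qed.

Lemma is_derive_Rmult (f g : R -> R) x a b : is_derive f x a -> is_derive g x b ->
  is_derive (fun s => f s * g s) x (a * g x + f x * b).
Proof.
  intros Ha Hb. apply (is_derive_mult f g x a b Ha Hb). intros; apply Rmult_comm.
Qed.

Lemma is_derive_Rsqr (f : R -> R) t l :
  is_derive f t l -> is_derive (fun s => f s ^ 2) t (2 * f t * l).
Proof.
  intros H. eapply is_derive_eq; [apply (is_derive_pow f 2 t l H)|]. simpl. ring.
Qed.

Lemma gronwall_zero D dD L : 0 < L ->
  (forall t, is_derive D t (dD t)) -> (forall t, Rabs (dD t) <= L * D t) ->
  (forall t, 0 <= D t) -> D 0 = 0 -> forall t, D t = 0.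
Proof.
  intros HL HdD Hb Hpos H0 t. apply Rle_antisym; [|apply Hpos].
  destruct (Rle_dec 0 t) as [Ht|Ht].
  - set (u := fun s => D s * exp (- L * s)).
    assert (Hu : forall s, is_derive u s ((dD s - L * D s) * exp (- L * s))).
    { intros s. eapply is_derive_eq.
      - apply (is_derive_Rmult D (fun s => exp (- L * s))); [apply HdD|].
        auto_derive; [exact I| reflexivity].
      - ring. }
    assert (Hle : u t <= u 0).
    { apply (is_derive_nonpos_decreasing u _ Hu); [|exact Ht].
      intros s. pose proof (Hb s). pose proof (Rle_abs (dD s)).
      pose proof (exp_pos (- L * s)). apply Rmult_le_0_r; lra. }
    unfold u in Hle. rewrite H0 in Hle. pose proof (exp_pos (- L * t)). nra.
  - set (u := fun s => - (D s * exp (L * s))).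
    assert (Hu : forall s, is_derive u s ((- dD s - L * D s) * exp (L * s))).
    { intros s. eapply is_derive_eq.
      - apply (is_derive_opp (fun s => D s * exp (L * s))).
        apply (is_derive_Rmult D (fun s => exp (L * s))); [apply HdD|].
        auto_derive; [exact I| reflexivity].
      - unfold opp; simpl. ring. }
    assert (Hle : u 0 <= u t).
    { apply (is_derive_nonpos_decreasing u _ Hu); [|lra].
      intros s. pose proof (Hb s). pose proof (Rle_abs (- dD s)). rewrite Rabs_Ropp in *.
      pose proof (exp_pos (L * s)). apply Rmult_le_0_r; lra. }
    unfold u in Hle. rewrite H0 in Hle. pose proof (exp_pos (L * t)). nra.
Qed.

Section Inverse.

Variables (f df : R -> R) (a b : R).
Hypothesis Hab : a < b.
Hypothesis Hf : forall x, a <= x <= b -> is_derive f x (df x) /\ 0 < df x.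

Lemma is_derive_pos_increasing_on x y : a <= x -> x < y -> y <= b -> f x < f y.
Proof.
  intros H1 H2 H3. apply (incr_function_le f (Finite a) (Finite b) df); simpl; auto.
  - intros z Hz1 Hz2; apply Hf; lra.
  - intros z Hz1 Hz2; apply Hf; lra.
Qed.

Lemma is_derive_right_inverse g y :
  (forall z, f a <= z <= f b -> a <= g z <= b /\ f (g z) = z) ->
  f a < y < f b -> is_derive g y (/ df (g y)).
Proof.
  intros Hg Hy.
  pose proof is_derive_pos_increasing_on as Hinc.
  assert (Hfab : f a < f b) by (apply Hinc; lra).
  assert (Hfix : forall x, a <= x <= b -> g (f x) = x).
  { intros x Hx. destruct (Hg (f x)) as [Hr He].
    { split; [destruct (Req_dec a x) | destruct (Req_dec x b)]; subst; try lra;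
        left; apply Hinc; lra. }
    destruct (Rtotal_order (g (f x)) x) as [Hl|[Hl|Hl]]; auto; exfalso;
      [pose proof (Hinc _ _ (proj1 Hr) Hl (proj2 Hx))
      |pose proof (Hinc _ _ (proj1 Hx) Hl (proj2 Hr))];
      lra. }
  assert (Prf : forall x, g (f a) <= x <= g (f b) -> derivable_pt f x).
  { intros x Hx. rewrite !Hfix in Hx by lra. exists (df x).
    apply is_derive_Reals. apply Hf; lra. }
  assert (Hcont : continuity_pt g y).
  { apply (continuity_pt_recip_interv f g a b Hab).
    - intros; apply Hinc; lra.
    - intros z Hz1 Hz2; unfold comp, id; apply Hg; lra.
    - intros z Hz1 Hz2; apply Hg; lra.
    - intros z Hz. apply (is_derive_continuity_pt f z (df z)). apply Hf; lra.
    - lra. }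
  assert (Hgy : g (f a) <= g y <= g (f b)) by (rewrite !Hfix by lra; apply Hg; lra).
  assert (Hd := derivable_pt_lim_recip_interv f g (f a) (f b) y Prf Hcont Hfab Hy Hgy).
  assert (Hdf : 0 < df (g y)) by (apply Hf, Hg; lra).
  rewrite (derive_pt_eq_0 _ _ (df (g y)) (Prf (g y) Hgy)) in Hd
    by (apply is_derive_Reals, Hf, Hg; lra).
  apply is_derive_Reals. replace (/ df (g y)) with (1 / df (g y)) by (unfold Rdiv; ring).
  apply Hd; [|lra]. intros z Hz; unfold comp, id; apply Hg; lra.
Qed.

Lemma is_derive_inverse_on :
  exists g, (forall z, f a <= z <= f b -> a <= g z <= b /\ f (g z) = z) /\
    (forall y, f a < y < f b -> is_derive g y (/ df (g y))).
Proof.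
  assert (Hcont : forall x, a <= x <= b -> continuity_pt f x).
  { intros x Hx. apply (is_derive_continuity_pt f x (df x)). apply Hf; lra. }
  assert (Hpre : forall z, exists x, f a <= z <= f b -> a <= x <= b /\ f x = z).
  { intros z. destruct (Rle_dec (f a) z) as [H1|H1]; [destruct (Rle_dec z (f b)) as [H2|H2]|].
    - destruct (f_interv_is_interv f a b z Hab (conj H1 H2) Hcont) as [x Hx].
      exists x; intros _; exact Hx.
    - exists a; intros; lra.
    - exists a; intros; lra. }
  destruct (choice _ Hpre) as [g Hg].
  exists g. split; [exact Hg|]. intros y Hy. apply is_derive_right_inverse; assumption.
Qed.

End Inverse.

Lemma is_derive_inverse (G dG : R -> R) m : 0 < m ->
  (forall x, is_derive G x (dG x)) -> (forall x, m <= dG x) ->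
  exists Th, (forall t, G (Th t) = t) /\ (forall x, Th (G x) = x) /\
    (forall t, is_derive Th t (/ dG (Th t))).
Proof.
  intros Hm HG HdG.
  assert (Hinc : forall x y, x < y -> G x < G y).
  { intros x y Hxy. apply (incr_function G m_infty p_infty dG); simpl; auto.
    intros z _ _; specialize (HdG z); lra. }
  assert (Hsurj : forall t, exists x, G x = t).
  { intros t. set (T := Rabs (t - G 0) / m + 1).
    assert (HT : Rabs (t - G 0) < m * T).
    { unfold T. field_simplify; [|lra]. pose proof (Rabs_pos (t - G 0)). lra. }
    assert (HT0 : 0 < T) by (pose proof (Rabs_pos (t - G 0)); nra).
    destruct (is_derive_MVT G dG 0 T HG) as [xi [_ H1]].
    destruct (is_derive_MVT G dG 0 (- T) HG) as [xi' [_ H2]].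
    pose proof (HdG xi). pose proof (HdG xi').
    pose proof (Rle_abs (t - G 0)). pose proof (Rle_abs (- (t - G 0))). rewrite Rabs_Ropp in *.
    destruct (f_interv_is_interv G (- T) T t ltac:(lra) ltac:(split; nra)
       (fun x _ => is_derive_continuity_pt _ _ _ (HG x))) as [x [_ Hx]].
    exists x; exact Hx. }
  destruct (choice _ Hsurj) as [Th HTh]. exists Th. split; [exact HTh| split].
  { intros x. specialize (HTh (G x)).
    destruct (Rtotal_order (Th (G x)) x) as [Hl|[Hl|Hl]]; auto; apply Hinc in Hl; lra. }
  intros t. apply (is_derive_right_inverse G dG (Th t - 1) (Th t + 1)); [lra| | |].
  - intros x _; split; [apply HG| specialize (HdG x); lra].
  - intros z Hz. split; [|apply HTh]. rewrite <- (HTh z) in Hz.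
    split; apply Rnot_lt_le; intros Hc; apply Hinc in Hc; lra.
  - pose proof (Hinc (Th t - 1) (Th t) ltac:(lra)).
    pose proof (Hinc (Th t) (Th t + 1) ltac:(lra)). rewrite HTh in *. lra.
Qed.

Lemma Rabs_le_of_sq a b : 0 <= b -> a ^ 2 <= b ^ 2 -> Rabs a <= b.
Proof.
  intros Hb H. rewrite <- (Rabs_pos_eq b Hb). apply Rsqr_le_abs_0.
  rewrite !Rsqr_pow2; exact H.
Qed.

Lemma Rle_of_sq a b : 0 <= a -> 0 <= b -> a ^ 2 <= b ^ 2 -> a <= b.
Proof.
  intros Ha Hb H. pose proof (Rabs_le_of_sq a b Hb H). rewrite Rabs_pos_eq in *; lra.
Qed.

Lemma norm2_sq v : norm2 v ^ 2 = fst v ^ 2 + snd v ^ 2.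
Proof.
  unfold norm2. rewrite <- Rsqr_pow2. rewrite Rsqr_sqrt; [reflexivity|nra].
Qed.

Lemma norm2_ge0 v : 0 <= norm2 v.
Proof. apply sqrt_pos. Qed.

Lemma norm2_sq_gt0 v : v <> (0, 0) -> 0 < fst v ^ 2 + snd v ^ 2.
Proof.
  destruct v as [a b]; simpl; intros H.
  destruct (Req_dec a 0); [destruct (Req_dec b 0)|]; subst; [now exfalso| nra| nra].
Qed.

Lemma norm2_gt0 v : v <> (0, 0) -> 0 < norm2 v.
Proof. intros H. apply sqrt_lt_R0. now apply norm2_sq_gt0. Qed.

Lemma norm2_gt0_neq0 v : 0 < norm2 v -> v <> (0, 0).
Proof.
  intros H Z. rewrite Z in H. unfold norm2 in H. simpl in H.
  rewrite Rmult_0_l, Rplus_0_l, sqrt_0 in H. lra.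
Qed.

Lemma Rabs_fst_le_norm2 v : Rabs (fst v) <= norm2 v.
Proof.
  apply Rabs_le_of_sq; [apply norm2_ge0|].
  rewrite norm2_sq. pose proof (pow2_ge_0 (snd v)). lra.
Qed.

Lemma ln_norm2 v : v <> (0, 0) -> ln (norm2 v) = ln (fst v ^ 2 + snd v ^ 2) / 2.
Proof.
  intros H. pose proof (norm2_gt0 v H). rewrite <- norm2_sq.
  simpl. rewrite Rmult_1_r, ln_mult by lra. lra.
Qed.

Lemma norm2_polar r th : 0 <= r -> norm2 (r * cos th, r * sin th) = r.
Proof.
  intros Hr. unfold norm2; cbn [fst snd].
  replace ((r * cos th) ^ 2 + (r * sin th) ^ 2) with (r ^ 2 * (sin th ^ 2 + cos th ^ 2)) by ring.
  rewrite <- !Rsqr_pow2, sin2_cos2, Rmult_1_r. apply sqrt_Rsqr; exact Hr.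
Qed.

Lemma polar_coordinates v : v <> (0, 0) ->
  exists th, v = (norm2 v * cos th, norm2 v * sin th).
Proof.
  intros H. pose proof (norm2_gt0 _ H) as Hr. pose proof (norm2_sq v) as Hsq.
  destruct v as [a b]. cbn [fst snd] in Hsq. set (r := norm2 (a, b)) in *. clearbody r.
  set (u := a / r).
  assert (Hu2 : 1 - u² = (b / r)²) by (unfold u, Rsqr; field_simplify_eq; lra).
  assert (Hu : -1 <= u <= 1).
  { apply Rabs_le_between, Rabs_le_of_sq; [lra|].
    pose proof (Rle_0_sqr (b / r)). unfold Rsqr in *. lra. }
  destruct (Rle_dec 0 b) as [Hb|Hb].
  - exists (acos u).
    rewrite cos_acos, sin_acos, Hu2, sqrt_Rsqr by (auto; apply Rdiv_le_0_compat; lra).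
    unfold u. f_equal; field; lra.
  - exists (- acos u). rewrite cos_neg, sin_neg, cos_acos, sin_acos, Hu2 by exact Hu.
    replace ((b / r)²) with ((- (b / r))²) by (unfold Rsqr; ring).
    rewrite sqrt_Rsqr by (unfold Rdiv; pose proof (Rinv_0_lt_compat r Hr); nra).
    unfold u. f_equal; field; lra.
Qed.

Lemma Rabs_cross_le x1 x2 y1 y2 :
  Rabs (x1 * y2 - x2 * y1) <= norm2 (x1 - y1, x2 - y2) * norm2 (y1, y2).
Proof.
  apply Rabs_le_of_sq; [apply Rmult_le_pos; apply norm2_ge0|].
  rewrite Rpow_mult_distr, !norm2_sq. cbn [fst snd].
  pose proof (pow2_ge_0 ((x1 - y1) * y1 + (x2 - y2) * y2)). nra.
Qed.

Lemma Rabs_norm2_sub_le x1 x2 y1 y2 :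
  Rabs (norm2 (x1, x2) - norm2 (y1, y2)) <= norm2 (x1 - y1, x2 - y2).
Proof.
  apply Rabs_le_of_sq; [apply norm2_ge0|].
  assert (Hdot : x1 * y1 + x2 * y2 <= norm2 (x1, x2) * norm2 (y1, y2)).
  { apply Rle_trans with (Rabs (x1 * y1 + x2 * y2)); [apply Rle_abs|].
    apply Rabs_le_of_sq; [apply Rmult_le_pos; apply norm2_ge0|].
    rewrite Rpow_mult_distr, !norm2_sq. cbn [fst snd].
    pose proof (pow2_ge_0 (x1 * y2 - x2 * y1)). nra. }
  replace ((norm2 (x1, x2) - norm2 (y1, y2)) ^ 2) with
    (norm2 (x1, x2) ^ 2 + norm2 (y1, y2) ^ 2 - 2 * (norm2 (x1, x2) * norm2 (y1, y2))) by ring.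
  rewrite !norm2_sq. cbn [fst snd]. nra.
Qed.

Lemma norm2_scale_lower_bound m a b v : 0 <= m -> m <= a -> m <= b ->
  m * norm2 v <= norm2 (a * fst v, b * snd v).
Proof.
  intros Hm Ha Hb. pose proof (norm2_ge0 v). pose proof (pow2_ge_0 (fst v)). pose proof (pow2_ge_0 (snd v)).
  assert (m ^ 2 <= a ^ 2) by (apply pow_incr; lra). assert (m ^ 2 <= b ^ 2) by (apply pow_incr; lra).
  apply Rle_of_sq; [nra| apply norm2_ge0|].
  rewrite Rpow_mult_distr, !norm2_sq; cbn [fst snd]. rewrite !Rpow_mult_distr. nra.
Qed.

Lemma norm2_scale_upper_bound M a b v : 0 <= a <= M -> 0 <= b <= M ->
  norm2 (a * fst v, b * snd v) <= M * norm2 v.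
Proof.
  intros Ha Hb. pose proof (norm2_ge0 v). pose proof (pow2_ge_0 (fst v)). pose proof (pow2_ge_0 (snd v)).
  assert (a ^ 2 <= M ^ 2) by (apply pow_incr; lra). assert (b ^ 2 <= M ^ 2) by (apply pow_incr; lra).
  apply Rle_of_sq; [apply norm2_ge0| nra|].
  rewrite Rpow_mult_distr, !norm2_sq; cbn [fst snd]. rewrite !Rpow_mult_distr. nra.
Qed.

(** The left-hand side is [d/dt |x - y|^2 / (2 c)] for two solutions [x], [y] of the flow below. *)
Lemma rotation_field_lipschitz x1 x2 y1 y2 m :
  0 < m -> m <= norm2 (x1, x2) -> m <= norm2 (y1, y2) ->
  Rabs ((x1 * y2 - x2 * y1) * ((x1 ^ 2 + x2 ^ 2) - (y1 ^ 2 + y2 ^ 2))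
         / ((x1 ^ 2 + x2 ^ 2) * (y1 ^ 2 + y2 ^ 2)))
  <= 2 / m ^ 2 * ((x1 - y1) ^ 2 + (x2 - y2) ^ 2).
Proof.
  intros Hm Hx Hy.
  pose proof (Rabs_cross_le x1 x2 y1 y2) as Hcr.
  pose proof (Rabs_norm2_sub_le x1 x2 y1 y2) as Hdn.
  pose proof (norm2_sq (x1, x2)) as HX. pose proof (norm2_sq (y1, y2)) as HY.
  pose proof (norm2_sq (x1 - y1, x2 - y2)) as HD. cbn [fst snd] in HX, HY, HD.
  rewrite <- HX, <- HY, <- HD.
  set (nx := norm2 (x1, x2)) in *. set (ny := norm2 (y1, y2)) in *.
  pose proof (norm2_ge0 (x1 - y1, x2 - y2)). set (nd := norm2 (x1 - y1, x2 - y2)) in *.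
  replace (nx ^ 2 - ny ^ 2) with ((nx - ny) * (nx + ny)) by ring.
  clearbody nx ny nd.
  unfold Rdiv. rewrite !Rabs_mult, (Rabs_pos_eq (nx + ny)) by lra.
  rewrite Rabs_inv, (Rabs_pos_eq (nx ^ 2 * ny ^ 2)) by (apply Rmult_le_pos; apply pow2_ge_0).
  apply Rle_trans with (nd ^ 2 * ny * (nx + ny) * / (nx ^ 2 * ny ^ 2)).
  { apply Rmult_le_compat_r; [left; apply Rinv_0_lt_compat, Rmult_lt_0_compat; apply pow_lt; lra|].
    rewrite <- Rmult_assoc. apply Rmult_le_compat_r; [lra|].
    replace (nd ^ 2 * ny) with ((nd * ny) * nd) by ring.
    apply Rmult_le_compat; try apply Rabs_pos; assumption. }
  replace (nd ^ 2 * ny * (nx + ny) * / (nx ^ 2 * ny ^ 2)) with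
    (nd ^ 2 * (/ (nx * ny) + / (nx * nx))) by (field; lra).
  rewrite (Rmult_comm _ (nd ^ 2)). apply Rmult_le_compat_l; [apply pow2_ge_0|].
  assert (/ (nx * ny) <= / m ^ 2) by (apply Rinv_le_contravar; [apply pow_lt| simpl]; nra).
  assert (/ (nx * nx) <= / m ^ 2) by (apply Rinv_le_contravar; [apply pow_lt| simpl]; nra).
  lra.
Qed.

(** * The Hamiltonian flow *)

(** [is_ham_solution h r0 a1 a2] is
    [is_flow_solution ((a1 + a2) * A_const h r0) ((a1 - a2) * B_const h r0)]. *)
Definition is_flow_solution (c d : R) (x : R -> R * R) : Prop :=
  forall t : R,
    x t <> (0, 0) /\
    is_derive (fun s => fst (x s)) t (- (c * snd (x t) / (norm2 (x t)) ^ 2)) /\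
    is_derive (fun s => snd (x s)) t (c * fst (x t) / (norm2 (x t)) ^ 2 - d).

Section Flow.

Variables c d : R.
Hypothesis Hc : 0 < c.
Hypothesis Hd : 0 < d.

Lemma flow_conserved x : is_flow_solution c d x -> forall t,
  c * ln (norm2 (x t)) - d * fst (x t) = c * ln (norm2 (x 0)) - d * fst (x 0).
Proof.
  intros Hs.
  set (Phi := fun t => c * (ln (fst (x t) ^ 2 + snd (x t) ^ 2) / 2) - d * fst (x t)).
  assert (HP : forall t, is_derive Phi t 0).
  { intros t. destruct (Hs t) as [Hne [H1 H2]].
    pose proof (norm2_sq_gt0 _ Hne) as HQ. rewrite norm2_sq in H1, H2.
    pose proof (is_derive_plus _ _ _ _ _ (is_derive_Rsqr _ _ _ H1) (is_derive_Rsqr _ _ _ H2)) as HQd.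
    pose proof (is_derive_comp ln _ t _ _ (is_derive_ln _ HQ) HQd) as Hl.
    pose proof (is_derive_minus _ _ _ _ _ (is_derive_scal _ _ (c / 2) _ Hl)
                  (is_derive_scal _ _ d _ H1)) as Hm.
    eapply is_derive_ext; [| eapply is_derive_eq; [exact Hm|]].
    - intros s. unfold Phi, minus, plus, opp, scal; simpl. unfold mult; simpl. field.
    - unfold minus, plus, opp, scal; simpl. unfold mult; simpl. field. lra. }
  intros t. pose proof (is_derive_0_constant Phi HP 0 t) as E. unfold Phi in E.
  rewrite !ln_norm2 by apply Hs. lra.
Qed.

(** If [r < c / d] then [|d x1 / c| < 1], so the conservation law gives [ln r > ln s - 1]. *)
Lemma flow_norm2_lower_bound s x : 0 < s -> is_flow_solution c d x ->
  ln (norm2 (x 0)) - d / c * fst (x 0) = ln s ->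
  forall t, Rmin (c / d) (s / exp 1) <= norm2 (x t).
Proof.
  intros Hs Hx Hln t.
  pose proof (flow_conserved x Hx t) as Hcons.
  pose proof (norm2_gt0 _ (proj1 (Hx t))) as Hr.
  pose proof (Rabs_fst_le_norm2 (x t)) as Hf. apply Rabs_le_between in Hf.
  set (r := norm2 (x t)) in *.
  assert (Hk : 0 < d / c) by (apply Rdiv_lt_0_compat; lra).
  assert (Hln2 : ln r = ln s + d / c * fst (x t)).
  { rewrite <- Hln. apply (Rmult_eq_reg_l c); [|lra]. field_simplify; lra. }
  destruct (Rle_dec (c / d) r) as [H1|H1].
  - apply Rle_trans with (c / d); [apply Rmin_l| exact H1].
  - apply Rle_trans with (s / exp 1); [apply Rmin_r|].
    assert (Hkr : d / c * r < 1).
    { replace 1 with (d / c * (c / d)) by (field; lra). apply Rmult_lt_compat_l; lra. }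
    assert (ln (s / exp 1) < ln r) by (rewrite ln_div, ln_exp, Hln2 by (apply exp_pos || lra); nra).
    apply ln_lt_inv in H; [lra| apply Rdiv_lt_0_compat; [lra| apply exp_pos]| lra].
Qed.

Lemma flow_unique x y m : 0 < m -> is_flow_solution c d x -> is_flow_solution c d y ->
  (forall t, m <= norm2 (x t)) -> (forall t, m <= norm2 (y t)) ->
  x 0 = y 0 -> forall t, x t = y t.
Proof.
  intros Hm Hx Hy Hmx Hmy H0.
  set (D := fun t => (fst (x t) - fst (y t)) ^ 2 + (snd (x t) - snd (y t)) ^ 2).
  set (dD := fun t =>
     2 * (fst (x t) - fst (y t))
       * (- (c * snd (x t) / norm2 (x t) ^ 2) - - (c * snd (y t) / norm2 (y t) ^ 2))
   + 2 * (snd (x t) - snd (y t))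
       * ((c * fst (x t) / norm2 (x t) ^ 2 - d) - (c * fst (y t) / norm2 (y t) ^ 2 - d))).
  assert (HdD : forall t, is_derive D t (dD t)).
  { intros t. destruct (Hx t) as [_ [Hx1 Hx2]]. destruct (Hy t) as [_ [Hy1 Hy2]].
    exact (is_derive_plus _ _ _ _ _ (is_derive_Rsqr _ _ _ (is_derive_minus _ _ _ _ _ Hx1 Hy1))
                                     (is_derive_Rsqr _ _ _ (is_derive_minus _ _ _ _ _ Hx2 Hy2))). }
  assert (Hbound : forall t, Rabs (dD t) <= 4 * c / m ^ 2 * D t).
  { intros t. unfold dD, D.
    pose proof (norm2_sq_gt0 _ (proj1 (Hx t))) as QX. pose proof (norm2_sq_gt0 _ (proj1 (Hy t))) as QY.
    pose proof (Hmx t) as Mx. pose proof (Hmy t) as My.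
    destruct (x t) as [x1 x2]. destruct (y t) as [y1 y2]. rewrite !norm2_sq. cbn [fst snd] in *.
    pose proof (rotation_field_lipschitz x1 x2 y1 y2 m Hm Mx My) as Hl.
    match goal with |- Rabs ?e <= _ =>
      replace e with (2 * c * ((x1 * y2 - x2 * y1) * ((x1 ^ 2 + x2 ^ 2) - (y1 ^ 2 + y2 ^ 2))
         / ((x1 ^ 2 + x2 ^ 2) * (y1 ^ 2 + y2 ^ 2)))) by (field; lra) end.
    rewrite Rabs_mult, (Rabs_pos_eq (2 * c)) by lra.
    replace (4 * c / m ^ 2) with (2 * c * (2 / m ^ 2)) by (field; lra).
    rewrite (Rmult_assoc (2 * c) (2 / m ^ 2)). apply Rmult_le_compat_l; lra. }
  assert (HD0 : D 0 = 0) by (unfold D; rewrite H0; ring).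
  assert (HDz : forall t, D t = 0).
  { apply (gronwall_zero D dD (4 * c / m ^ 2)); [| exact HdD| exact Hbound| | exact HD0].
    - apply Rdiv_lt_0_compat; [lra| apply pow_lt; lra].
    - intros t; unfold D.
      pose proof (pow2_ge_0 (fst (x t) - fst (y t))).
      pose proof (pow2_ge_0 (snd (x t) - snd (y t))). lra. }
  intros t. specialize (HDz t). unfold D in HDz. destruct (x t) as [x1 x2], (y t) as [y1 y2].
  cbn [fst snd] in HDz. pose proof (pow2_ge_0 (x1 - y1)). pose proof (pow2_ge_0 (x2 - y2)).
  f_equal; nra.
Qed.

End Flow.

(** * Explicit periodic solutions *)

Definition wexp (w : R) : R := w * exp (- w).

Lemma is_derive_wexp w : is_derive wexp w ((1 - w) * exp (- w)).
Proof. unfold wexp. auto_derive; [exact I| ring]. Qed.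

Lemma exp_1_gt1 : 1 < exp 1.
Proof. pose proof (exp_ineq1 1 R1_neq_R0). lra. Qed.

(** [wexp] increases on [(-oo, 1]] and takes the values [-kap] and [kap] inside
    [[-kap e, (1 + kap e) / 2]], which is therefore the branch used to invert it. *)
Lemma wexp_inverse kap : 0 < kap -> kap * exp 1 < 1 ->
  exists W : R -> R,
    (forall b, - kap <= b <= kap ->
       - (kap * exp 1) <= W b <= (1 + kap * exp 1) / 2 /\ wexp (W b) = b) /\
    (forall b, - kap <= b <= kap -> is_derive W b (exp (W b) / (1 - W b))) /\
    (forall w b, - (kap * exp 1) <= w <= (1 + kap * exp 1) / 2 -> wexp w = b ->
       - kap <= b <= kap -> W b = w).
Proof.
  intros Hk Hke. set (wl := - (kap * exp 1)). set (wh := (1 + kap * exp 1) / 2).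
  pose proof exp_1_gt1.
  assert (Hwlwh : wl < wh) by (unfold wl, wh; nra).
  assert (Hdf : forall x, wl <= x <= wh ->
             is_derive wexp x ((fun x => (1 - x) * exp (- x)) x) /\ 0 < (1 - x) * exp (- x)).
  { intros x Hx. split; [apply is_derive_wexp|].
    apply Rmult_lt_0_compat; [unfold wh in Hx; lra| apply exp_pos]. }
  destruct (is_derive_inverse_on wexp _ wl wh Hwlwh Hdf) as [W [HW1 HW2]].
  assert (Hpl : wexp wl < - kap).
  { unfold wexp, wl. rewrite Ropp_involutive.
    pose proof (exp_ineq1_le (kap * exp 1)).
    assert (kap < kap * exp 1) by nra.
    assert (kap * exp 1 <= kap * exp 1 * exp (kap * exp 1)) by nra. lra. }
  assert (Hph : kap < wexp wh).
  { unfold wexp, wh.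
    replace (exp (- ((1 + kap * exp 1) / 2))) with (exp ((1 - kap * exp 1) / 2) * / exp 1)
      by (rewrite <- exp_Ropp, <- exp_plus; f_equal; field).
    assert (1 + (1 - kap * exp 1) / 2 < exp ((1 - kap * exp 1) / 2)) by (apply exp_ineq1; lra).
    apply (Rmult_lt_reg_r (exp 1)); [apply exp_pos|].
    rewrite !Rmult_assoc, Rinv_l, Rmult_1_r by (apply Rgt_not_eq, exp_pos).
    assert (0 < kap * exp 1) by nra. nra. }
  exists W. split; [|split].
  - intros b Hb. apply HW1. lra.
  - intros b Hb. eapply is_derive_eq; [apply HW2; lra|].
    destruct (HW1 b ltac:(lra)) as [Hr _]. unfold wh in Hr. pose proof (exp_pos (W b)).
    rewrite exp_Ropp. field. lra.
  - intros w b Hw Hp Hb. destruct (HW1 b ltac:(lra)) as [Hr He].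
    destruct (Rtotal_order (W b) w) as [Hl|[Hl|Hl]]; auto; exfalso;
      [pose proof (is_derive_pos_increasing_on _ _ wl wh Hdf (W b) w ltac:(lra) Hl ltac:(lra))
      |pose proof (is_derive_pos_increasing_on _ _ wl wh Hdf w (W b) ltac:(lra) Hl ltac:(lra))];
      lra.
Qed.

Section LevelCurve.

Variables c d s : R.
Variable W : R -> R.
Hypothesis Hc : 0 < c.
Hypothesis Hd : 0 < d.
Hypothesis Hs : 0 < s.

Let kap := d / c * s.

Hypothesis Hkap : kap * exp 1 < 1.
Hypothesis HW_range : forall b, - kap <= b <= kap ->
  - (kap * exp 1) <= W b <= (1 + kap * exp 1) / 2 /\ wexp (W b) = b.
Hypothesis HW_derive : forall b, - kap <= b <= kap -> is_derive W b (exp (W b) / (1 - W b)).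
Hypothesis HW_unique : forall w b, - (kap * exp 1) <= w <= (1 + kap * exp 1) / 2 ->
  wexp w = b -> - kap <= b <= kap -> W b = w.

(** In polar coordinates the level set [ln r - (d / c) r cos th = ln s] is
    [r = s exp w] with [wexp w = kap cos th]. *)
Definition level_w th := W (kap * cos th).
Definition level_radius th := s * exp (level_w th).
(** [dt / dth] along the flow. *)
Definition level_time_rate th := level_radius th ^ 2 / (c * (1 - level_w th)).

Lemma kap_pos : 0 < kap.
Proof. unfold kap. apply Rmult_lt_0_compat; [apply Rdiv_lt_0_compat|]; lra. Qed.

Lemma kap_cos_bound th : - kap <= kap * cos th <= kap.
Proof. pose proof (COS_bound th). pose proof kap_pos. split; nra. Qed.

Lemma level_w_spec th : - (kap * exp 1) <= level_w th <= (1 + kap * exp 1) / 2 /\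
  wexp (level_w th) = kap * cos th.
Proof. apply HW_range, kap_cos_bound. Qed.

Lemma level_w_lt1 th : level_w th < 1.
Proof. pose proof (level_w_spec th). lra. Qed.

Lemma level_w_fixed_point th : level_w th = kap * cos th * exp (level_w th).
Proof.
  destruct (level_w_spec th) as [_ H]. unfold wexp in H. rewrite <- H, Rmult_assoc, <- exp_plus.
  replace (- level_w th + level_w th) with 0 by ring. rewrite exp_0; ring.
Qed.

Lemma level_radius_pos th : 0 < level_radius th.
Proof. unfold level_radius. pose proof (exp_pos (level_w th)). nra. Qed.

Lemma level_radius_lower_bound th : s * exp (- (kap * exp 1)) <= level_radius th.
Proof.
  unfold level_radius. destruct (level_w_spec th) as [[H _] _].
  apply Rmult_le_compat_l; [lra|]. apply exp_le_compat, H.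
Qed.

Lemma is_derive_level_w th :
  is_derive level_w th (exp (level_w th) / (1 - level_w th) * (kap * - sin th)).
Proof.
  eapply is_derive_eq;
    [apply (is_derive_comp W (fun th => kap * cos th)); [apply HW_derive, kap_cos_bound|]|].
  - auto_derive; [exact I| reflexivity].
  - unfold level_w, scal; simpl; unfold mult; simpl. ring.
Qed.

Lemma is_derive_level_radius th : is_derive level_radius th
  (level_radius th * (exp (level_w th) / (1 - level_w th) * (kap * - sin th))).
Proof.
  unfold level_radius. eapply is_derive_eq.
  - apply (is_derive_scal (fun th => exp (level_w th))).
    apply (is_derive_comp exp level_w); [apply is_derive_exp| apply is_derive_level_w].
  - unfold scal; simpl; unfold mult; simpl. ring.
Qed.

Lemma level_time_rate_lower_bound th :
  (s * exp (- (kap * exp 1))) ^ 2 / (c * (1 + kap * exp 1)) <= level_time_rate th.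
Proof.
  unfold level_time_rate. destruct (level_w_spec th) as [[H1 H2] _].
  pose proof (level_radius_lower_bound th). pose proof (exp_pos (- (kap * exp 1))).
  unfold Rdiv. apply Rmult_le_compat.
  - apply pow2_ge_0.
  - left; apply Rinv_0_lt_compat. pose proof kap_pos. pose proof (exp_pos 1). nra.
  - apply pow_incr. split; [|assumption]. left; apply Rmult_lt_0_compat; lra.
  - apply Rinv_le_contravar; [pose proof (level_w_lt1 th); nra| nra].
Qed.

Lemma level_time_rate_continuous th : continuous level_time_rate th.
Proof.
  apply (@ex_derive_continuous R_AbsRing R_NormedModule).
  unfold level_time_rate, level_radius, level_w. auto_derive.
  pose proof (level_w_lt1 th). unfold level_w in H.
  repeat split; try (eexists; apply HW_derive, kap_cos_bound). nra.
Qed.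

Lemma level_w_periodic th : level_w (th + 2 * PI) = level_w th.
Proof. unfold level_w. rewrite cos_plus, cos_2PI, sin_2PI. f_equal. ring. Qed.

Lemma level_time_rate_periodic th : level_time_rate (th + 2 * PI) = level_time_rate th.
Proof. unfold level_time_rate, level_radius. rewrite level_w_periodic. reflexivity. Qed.

Definition level_curve (Th : R -> R) t :=
  (level_radius (Th t) * cos (Th t), level_radius (Th t) * sin (Th t)).

Lemma norm2_level_curve Th t : norm2 (level_curve Th t) = level_radius (Th t).
Proof. apply norm2_polar. left; apply level_radius_pos. Qed.

(** The chain rule produces the vector field thanks to [w = kap cos th exp w]. *)
Lemma level_curve_solution Th : (forall t, is_derive Th t (/ level_time_rate (Th t))) ->
  is_flow_solution c d (level_curve Th).
Proof.
  intros HTh t.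
  pose proof (is_derive_comp _ Th t _ _ (is_derive_level_radius (Th t)) (HTh t)) as HA.
  pose proof (is_derive_comp _ Th t _ _ (is_derive_cos (Th t)) (HTh t)) as HB.
  pose proof (is_derive_comp _ Th t _ _ (is_derive_sin (Th t)) (HTh t)) as HC.
  set (th := Th t) in *.
  pose proof (level_radius_pos th) as HR. pose proof (level_w_lt1 th) as Hw1.
  pose proof (level_w_fixed_point th) as Hfix. pose proof (sin2_cos2 th) as Hsc. unfold Rsqr in Hsc.
  unfold level_curve. fold th. rewrite norm2_polar by lra. cbn [fst snd].
  unfold scal in HA, HB, HC; simpl in HA, HB, HC; unfold mult in HA, HB, HC; simpl in HA, HB, HC.
  unfold level_time_rate in HA, HB, HC. unfold level_radius in *.
  split; [apply norm2_gt0_neq0; rewrite norm2_polar; lra|].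
  pose proof (is_derive_Rmult _ _ _ _ _ HA HB) as H1.
  pose proof (is_derive_Rmult _ _ _ _ _ HA HC) as H2.
  cbv beta in H1, H2. fold th in H1, H2.
  set (E := exp (level_w th)) in *. pose proof (exp_pos (level_w th)). fold E in H.
  clearbody E. set (w := level_w th) in *. clearbody w. subst w. unfold kap in *.
  assert (Hden : 0 < c - d * s * cos th * E).
  { replace (c - d * s * cos th * E) with (c * (1 - d / c * s * cos th * E)) by (field; lra).
    apply Rmult_lt_0_compat; lra. }
  split; eapply is_derive_eq; [exact H1| | exact H2|].
  - field. lra.
  - assert (Hs2 : sin th ^ 2 = 1 - cos th ^ 2) by (simpl; lra).
    field_simplify; [|lra..]. rewrite Hs2. field. lra.
Qed.

Lemma level_radius_eq th r : 0 < r -> d / c * r <= 1 / 2 ->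
  ln r - d / c * (r * cos th) = ln s -> level_radius th = r.
Proof.
  intros Hr Hkr Hln. set (w0 := ln (r / s)).
  assert (Hw0e : exp w0 = r / s) by (apply exp_ln, Rdiv_lt_0_compat; lra).
  assert (Hw0 : w0 = d / c * r * cos th) by (unfold w0; rewrite ln_div by lra; lra).
  pose proof (COS_bound th) as Hcos. pose proof exp_1_gt1. pose proof kap_pos.
  assert (Hk : 0 < d / c) by (apply Rdiv_lt_0_compat; lra).
  assert (Hkr0 : 0 < d / c * r) by (apply Rmult_lt_0_compat; lra).
  assert (Hw0b : - (1 / 2) <= w0 <= 1 / 2).
  { rewrite Hw0.
    assert (0 <= d / c * r * (cos th + 1)) by (apply Rmult_le_pos; lra).
    assert (0 <= d / c * r * (1 - cos th)) by (apply Rmult_le_pos; lra). lra. }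
  assert (Hrs : r < s * exp 1).
  { replace r with (s * (r / s)) by (field; lra). apply Rmult_lt_compat_l; [lra|].
    rewrite <- Hw0e. apply exp_increasing. lra. }
  unfold level_radius, level_w. rewrite (HW_unique w0).
  - rewrite Hw0e. field. lra.
  - rewrite Hw0. unfold kap. split; [|nra].
    assert (d / c * r * (cos th + 1) >= 0) by nra.
    assert (d / c * r < d / c * s * exp 1) by (rewrite Rmult_assoc; apply Rmult_lt_compat_l; lra).
    nra.
  - unfold wexp. rewrite exp_Ropp, Hw0e, Hw0. unfold kap. field. lra.
  - apply kap_cos_bound.
Qed.

Lemma level_angle_exists th0 : exists Th P, 0 < P /\ Th 0 = th0 /\
  (forall t, Th (t + P) = Th t + 2 * PI) /\ (forall t, is_derive Th t (/ level_time_rate (Th t))).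
Proof.
  set (mF := (s * exp (- (kap * exp 1))) ^ 2 / (c * (1 + kap * exp 1))).
  assert (HmF : 0 < mF).
  { pose proof (Rmult_lt_0_compat _ _ kap_pos (exp_pos 1)). pose proof (exp_pos (- (kap * exp 1))).
    apply Rdiv_lt_0_compat; [apply pow_lt, Rmult_lt_0_compat| apply Rmult_lt_0_compat]; lra. }
  set (G := fun th => RInt level_time_rate th0 th).
  assert (HG : forall th, is_derive G th (level_time_rate th)).
  { intros th. apply (is_derive_RInt level_time_rate G th0 th); [|apply level_time_rate_continuous].
    apply filter_forall. intros y. apply (@RInt_correct R_CompleteNormedModule).
    apply (@ex_RInt_continuous R_CompleteNormedModule). intros; apply level_time_rate_continuous. }
  assert (HG0 : G th0 = 0) by exact (@RInt_point R_CompleteNormedModule th0 level_time_rate).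
  destruct (is_derive_inverse G _ mF HmF HG level_time_rate_lower_bound) as [Th [HGTh [HThG HTh]]].
  set (P := G (th0 + 2 * PI)).
  assert (HGP : forall th, G (th + 2 * PI) = G th + P).
  { assert (Hd0 : forall th, is_derive (fun th => G (th + 2 * PI) - G th) th 0).
    { intros th.
      assert (Hshift : is_derive (fun th => th + 2 * PI) th 1) by (auto_derive; [exact I| ring]).
      pose proof (is_derive_comp G _ th _ _ (HG (th + 2 * PI)) Hshift) as H1.
      eapply is_derive_eq; [apply (is_derive_minus _ _ _ _ _ H1 (HG th))|].
      rewrite level_time_rate_periodic. unfold minus, plus, opp, scal; simpl.
      unfold mult; simpl. ring. }
    intros th. pose proof (is_derive_0_constant _ Hd0 th0 th) as E. cbv beta in E.
    rewrite HG0 in E. fold P in E. lra. }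
  exists Th, P. split; [|split; [|split; [|exact HTh]]].
  - destruct (is_derive_MVT G _ th0 (th0 + 2 * PI) HG) as [xi [_ Hxi]].
    pose proof (level_time_rate_lower_bound xi) as Hxi'. fold mF in Hxi'. pose proof PI_RGT_0.
    rewrite HG0 in Hxi. replace (th0 + 2 * PI - th0) with (2 * PI) in Hxi by ring.
    unfold P. nra.
  - rewrite <- HG0. apply HThG.
  - intros t. rewrite <- (HGTh t) at 1. rewrite <- HGP. apply HThG.
Qed.

Lemma level_curve_periodic_solution x0 : x0 <> (0, 0) -> d / c * norm2 x0 <= 1 / 2 ->
  ln (norm2 x0) - d / c * fst x0 = ln s ->
  exists x P, is_flow_solution c d x /\ x 0 = x0 /\ 0 < P /\ (forall t, x (t + P) = x t) /\
    (forall t, s * exp (- (kap * exp 1)) <= norm2 (x t)).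
Proof.
  intros Hx0 Hkr Hln.
  destruct (polar_coordinates x0 Hx0) as [th0 Hth0].
  assert (HR0 : level_radius th0 = norm2 x0).
  { apply level_radius_eq; [apply norm2_gt0, Hx0| exact Hkr|].
    rewrite Hth0 in Hln at 2. exact Hln. }
  destruct (level_angle_exists th0) as [Th [P [HP [HTh0 [HThP HTh]]]]].
  exists (level_curve Th), P. split; [|split; [|split; [exact HP|split]]].
  - apply level_curve_solution, HTh.
  - unfold level_curve. rewrite HTh0, HR0. symmetry. exact Hth0.
  - intros t. unfold level_curve.
    rewrite HThP, cos_plus, sin_plus, cos_2PI, sin_2PI.
    unfold level_radius. rewrite level_w_periodic. f_equal; ring.
  - intros t. rewrite norm2_level_curve. apply level_radius_lower_bound.
Qed.

End LevelCurve.

(** The vector field is Lipschitz away from the origin, and both the explicit solution and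
    any other one through [x0] stay away from it. *)
Lemma flow_solutions_periodic c d s x0 : 0 < c -> 0 < d -> 0 < s -> d / c * s * exp 1 < 1 ->
  x0 <> (0, 0) -> d / c * norm2 x0 <= 1 / 2 -> ln (norm2 x0) - d / c * fst x0 = ln s ->
  (exists x, is_flow_solution c d x /\ x 0 = x0) /\
  (forall y, is_flow_solution c d y -> y 0 = x0 -> exists P, 0 < P /\
     (forall t, y (t + P) = y t) /\ (forall t, s * exp (- (d / c * s * exp 1)) <= norm2 (y t))).
Proof.
  intros Hc Hd Hs Hkap Hx0 Hkr Hln.
  assert (Hk : 0 < d / c * s) by (apply Rmult_lt_0_compat; [apply Rdiv_lt_0_compat|]; lra).
  destruct (wexp_inverse _ Hk Hkap) as [W [HW1 [HW2 HW3]]].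
  destruct (level_curve_periodic_solution c d s W Hc Hd Hs Hkap HW1 HW2 HW3 x0 Hx0 Hkr Hln)
    as [x [P [Hx [Hx0' [HP [Hper Hlow]]]]]].
  split; [exists x; split; assumption|]. intros y Hy Hy0.
  set (m := Rmin (Rmin (c / d) (s / exp 1)) (s * exp (- (d / c * s * exp 1)))).
  assert (Hm : 0 < m).
  { pose proof (exp_pos 1). pose proof (exp_pos (- (d / c * s * exp 1))).
    apply Rmin_pos; [apply Rmin_pos; apply Rdiv_lt_0_compat|]; nra. }
  assert (Hyx : forall t, y t = x t).
  { apply (flow_unique c d Hc y x m Hm Hy Hx).
    - intros t. apply Rle_trans with (Rmin (c / d) (s / exp 1)); [apply Rmin_l|].
      apply (flow_norm2_lower_bound c d Hc Hd s y Hs Hy). rewrite Hy0. exact Hln.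
    - intros t. apply Rle_trans with (s * exp (- (d / c * s * exp 1))); [apply Rmin_r| apply Hlow].
    - congruence. }
  exists P. split; [exact HP| split; intros t; rewrite !Hyx; [apply Hper| apply Hlow]].
Qed.

(** The level [s] of a small initial radius [r] is within a factor [exp (k r)] of [r],
    so the orbit stays above [r exp (-10 k r)]. *)
Lemma small_level_estimates k r x1 gam : 0 < k -> 0 < r -> Rabs x1 <= r -> 0 < gam < 1 ->
  10 * (k * r) < Rmin 1 (- ln gam) ->
  let s := exp (ln r - k * x1) in k * s * exp 1 < 1 /\ gam * r <= s * exp (- (k * s * exp 1)).
Proof.
  intros Hk Hr Hx1 Hgam Hsmall s.
  pose proof (Rmin_l 1 (- ln gam)). pose proof (Rmin_r 1 (- ln gam)).
  apply Rabs_le_between in Hx1. set (u := k * r) in *.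
  assert (Hu : 0 < u) by (apply Rmult_lt_0_compat; lra).
  assert (Hkx : - u <= k * x1 <= u) by (unfold u; split; nra).
  assert (Hse : s = r * exp (- (k * x1))) by (unfold s, Rminus; rewrite exp_plus, exp_ln; lra).
  pose proof exp_le_3.
  assert (Hkse : k * s * exp 1 <= 9 * u).
  { assert (exp (- (k * x1)) <= exp u) by (apply exp_le_compat; lra).
    assert (exp u <= exp 1) by (apply exp_le_compat; lra).
    assert (k * s * exp 1 = u * (exp (- (k * x1)) * exp 1)) by (rewrite Hse; unfold u; ring).
    assert (exp (- (k * x1)) * exp 1 <= 3 * 3).
    { pose proof (exp_pos (- (k * x1))). apply Rmult_le_compat; lra. }
    nra. }
  split; [lra|].
  assert (exp (- u) <= exp (- (k * x1))) by (apply exp_le_compat; lra).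
  assert (exp (- (9 * u)) <= exp (- (k * s * exp 1))) by (apply exp_le_compat; lra).
  assert (gam < exp (- u) * exp (- (9 * u))).
  { rewrite <- exp_plus, <- (exp_ln gam) by lra. apply exp_increasing. lra. }
  assert (exp (- u) * exp (- (9 * u)) <= exp (- (k * x1)) * exp (- (k * s * exp 1))).
  { pose proof (exp_pos (- u)). pose proof (exp_pos (- (9 * u))). apply Rmult_le_compat; lra. }
  rewrite Hse at 1. rewrite Rmult_assoc. nra.
Qed.

Lemma small_orbit c d x0 gam : 0 < c -> 0 < d -> 0 < gam < 1 -> x0 <> (0, 0) ->
  10 * (d / c * norm2 x0) < Rmin 1 (- ln gam) ->
  exp (2 * (c * ln (norm2 x0) - d * fst x0) / c) < (c / d / exp 1) ^ 2 /\
  (exists x, is_flow_solution c d x /\ x 0 = x0) /\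
  (forall y, is_flow_solution c d y -> y 0 = x0 -> exists P, 0 < P /\
     (forall t, y (t + P) = y t) /\ (forall t, gam * norm2 x0 <= norm2 (y t))).
Proof.
  intros Hc Hd Hgam Hx0 Hsmall.
  pose proof (norm2_gt0 _ Hx0) as Hr. pose proof (Rdiv_lt_0_compat d c Hd Hc) as Hk.
  destruct (small_level_estimates (d / c) (norm2 x0) (fst x0) gam Hk Hr
              (Rabs_fst_le_norm2 x0) Hgam Hsmall) as [Hkap Hlow].
  set (s := exp (ln (norm2 x0) - d / c * fst x0)) in *.
  assert (Hs : 0 < s) by apply exp_pos.
  assert (Hsln : ln (norm2 x0) - d / c * fst x0 = ln s) by (symmetry; apply ln_exp).
  pose proof (Rmin_l 1 (- ln gam)).
  destruct (flow_solutions_periodic c d s x0 Hc Hd Hs Hkap Hx0 ltac:(lra) Hsln) as [Hex Hall].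
  split; [|split; [exact Hex|]].
  - replace (2 * (c * ln (norm2 x0) - d * fst x0) / c) with (ln s + ln s)
      by (rewrite <- Hsln; field; lra).
    rewrite exp_plus, exp_ln by exact Hs.
    assert (s < c / d / exp 1).
    { pose proof (exp_pos 1). apply (Rmult_lt_reg_r (d / c * exp 1)); [nra|].
      replace (c / d / exp 1 * (d / c * exp 1)) with 1 by (field; split; lra). nra. }
    simpl. rewrite Rmult_1_r. apply Rmult_le_0_lt_compat; lra.
  - intros y Hy Hy0. destruct (Hall y Hy Hy0) as [P [HP [Hper Hy_low]]].
    exists P. split; [exact HP| split; [exact Hper|]].
    intros t. eapply Rle_trans; [exact Hlow| apply Hy_low].
Qed.

(** * The rescaled vortex pair *)

Lemma INR_inv_eventually_lt K L : 0 <= K -> 0 < L ->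
  exists N0 : nat, forall n : nat, (n > N0)%nat -> 0 < INR n /\ K / INR n < L.
Proof.
  intros HK HL. destruct (INR_unbounded (K / L)) as [N0 HN0]. exists N0. intros n Hn.
  apply lt_INR in Hn. assert (0 <= K / L) by (apply Rdiv_le_0_compat; lra).
  split; [lra|]. apply (proj2 (Rlt_div_l K L (INR n) ltac:(lra))).
  replace K with (L * (K / L)) by (field; lra). apply Rmult_lt_compat_l; lra.
Qed.

Section Constants.

Variables h r0 : R.
Hypothesis Hh : 0 < h.
Hypothesis Hr0 : 0 < r0.

Let Sq := sqrt (h ^ 2 + r0 ^ 2).

Lemma sqrt_h_r0_pos : 0 < Sq.
Proof. apply sqrt_lt_R0. nra. Qed.

Lemma h_denominator_pos : 0 < h ^ 2 + h * Sq.
Proof. pose proof sqrt_h_r0_pos. nra. Qed.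

Lemma A_const_pos : 0 < A_const h r0.
Proof.
  pose proof sqrt_h_r0_pos. pose proof h_denominator_pos. pose proof PI_RGT_0.
  unfold A_const. fold Sq. apply Rdiv_lt_0_compat.
  - apply Rmult_lt_0_compat; [lra|]. pose proof (pow2_ge_0 r0). lra.
  - apply Rmult_lt_0_compat; [apply Rmult_lt_0_compat|]; [apply Rmult_lt_0_compat| |]; lra.
Qed.

Lemma B_const_pos : 0 < B_const h r0.
Proof.
  pose proof sqrt_h_r0_pos. pose proof PI_RGT_0. pose proof (exp_pos (RInt (g_fun h) 0 (r0 ^ 2))).
  unfold B_const, tau. fold Sq. apply Rdiv_lt_0_compat; [apply Rmult_lt_0_compat; lra|].
  apply Rmult_lt_0_compat; [apply Rmult_lt_0_compat|]; [apply Rmult_lt_0_compat| |]; lra.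
Qed.

Lemma c0_pos : 0 < c0 h r0.
Proof. apply exp_pos. Qed.

Lemma C0_eq : C0 h r0 = c0 h r0 * (r0 ^ 2 + h ^ 2 + h * Sq) / (h ^ 2 + h * Sq).
Proof. pose proof sqrt_h_r0_pos. unfold C0, c0. fold Sq. field. nra. Qed.

Lemma c0_le_C0 : c0 h r0 <= C0 h r0.
Proof.
  pose proof sqrt_h_r0_pos. pose proof c0_pos. rewrite C0_eq.
  apply Rle_div_r; [nra|]. nra.
Qed.

Lemma beta_C0_lt_c0 beta :
  beta < (h ^ 2 + h * Sq) / (r0 ^ 2 + h ^ 2 + h * Sq) -> beta * C0 h r0 < c0 h r0.
Proof.
  intros Hb. pose proof sqrt_h_r0_pos. pose proof c0_pos. rewrite C0_eq.
  apply Rlt_div_r in Hb; [|nra].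
  replace (beta * (c0 h r0 * (r0 ^ 2 + h ^ 2 + h * Sq) / (h ^ 2 + h * Sq))) with
    (c0 h r0 * (beta * (r0 ^ 2 + h ^ 2 + h * Sq) / (h ^ 2 + h * Sq))) by (field; nra).
  rewrite <- (Rmult_1_r (c0 h r0)) at 2. apply Rmult_lt_compat_l; [lra|].
  apply Rlt_div_l; nra.
Qed.

Lemma norm2_DT0_bounds v :
  c0 h r0 * norm2 v <= norm2 (DT0 h r0 v) <= C0 h r0 * norm2 v.
Proof.
  pose proof c0_pos. pose proof c0_le_C0. split.
  - apply norm2_scale_lower_bound; lra.
  - apply norm2_scale_upper_bound; lra.
Qed.

Lemma norm2_DT0inv_lower_bound w : norm2 w / C0 h r0 <= norm2 (DT0inv h r0 w).
Proof.
  pose proof c0_pos. pose proof c0_le_C0. unfold DT0inv, Rdiv.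
  rewrite Rmult_comm, (Rmult_comm (fst w)), (Rmult_comm (snd w)).
  apply norm2_scale_lower_bound.
  - left; apply Rinv_0_lt_compat; lra.
  - lra.
  - apply Rinv_le_contravar; lra.
Qed.

Lemma norm2_DT0inv_orbit_lower_bound beta delta x0 y : 0 <= beta ->
  c0 h r0 * delta <= norm2 x0 -> beta * C0 h r0 / c0 h r0 * norm2 x0 <= norm2 y ->
  beta * delta <= norm2 (DT0inv h r0 y).
Proof.
  intros Hb Hx0 Hy. pose proof c0_pos. pose proof c0_le_C0.
  eapply Rle_trans; [|apply norm2_DT0inv_lower_bound].
  apply (Rle_div_r _ _ (C0 h r0)); [lra|].
  apply Rle_trans with (beta * C0 h r0 / c0 h r0 * norm2 x0); [|exact Hy].
  replace (beta * delta * C0 h r0) with (beta * C0 h r0 / c0 h r0 * (c0 h r0 * delta)) by (field; lra).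
  apply Rmult_le_compat_l; [|exact Hx0]. apply Rdiv_le_0_compat; nra.
Qed.

Lemma DT0_small_image k delta L v : 0 < k -> 0 < delta -> norm2 v = delta ->
  10 * k * C0 h r0 * delta < L ->
  DT0 h r0 v <> (0, 0) /\ c0 h r0 * delta <= norm2 (DT0 h r0 v) /\
  10 * (k * norm2 (DT0 h r0 v)) < L.
Proof.
  intros Hk Hdelta Hv Hsmall. pose proof c0_pos.
  destruct (norm2_DT0_bounds v) as [Hlo Hup]. rewrite Hv in Hlo, Hup.
  split; [|split; [exact Hlo|]].
  - apply norm2_gt0_neq0. nra.
  - eapply Rle_lt_trans; [|exact Hsmall]. nra.
Qed.

End Constants.

Lemma Rmin_1_opp_ln_pos gam : 0 < gam < 1 -> 0 < Rmin 1 (- ln gam).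
Proof.
  intros Hgam. pose proof (ln_increasing gam 1 (proj1 Hgam) (proj2 Hgam)).
  rewrite ln_1 in *. apply Rmin_pos; lra.
Qed.

Lemma vortex_pair_constants h r0 a1 a2 beta : 0 < h -> 0 < r0 -> a1 > Rabs a2 -> 0 < beta ->
  beta < (h ^ 2 + h * sqrt (h ^ 2 + r0 ^ 2)) / (r0 ^ 2 + h ^ 2 + h * sqrt (h ^ 2 + r0 ^ 2)) ->
  0 < (a1 + a2) * A_const h r0 /\ 0 < (a1 - a2) * B_const h r0 /\
  0 < beta * C0 h r0 / c0 h r0 < 1.
Proof.
  intros Hh Hr0 Ha Hb0 Hb1.
  pose proof (A_const_pos h r0 Hh Hr0). pose proof (B_const_pos h r0 Hh Hr0).
  pose proof (c0_pos h r0). pose proof (c0_le_C0 h r0 Hh Hr0).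
  pose proof (beta_C0_lt_c0 h r0 Hh Hr0 beta Hb1).
  pose proof (Rle_abs a2). pose proof (Rle_abs (- a2)). rewrite Rabs_Ropp in *.
  split; [|split]; [apply Rmult_lt_0_compat; lra| apply Rmult_lt_0_compat; lra|].
  split; [apply Rdiv_lt_0_compat; nra| apply Rlt_div_l; lra].
Qed.

Lemma C_star_eq h r0 a1 a2 : (a1 - a2) * B_const h r0 <> 0 ->
  C_star h r0 a1 a2 = ((a1 + a2) * A_const h r0 / ((a1 - a2) * B_const h r0) / exp 1) ^ 2.
Proof.
  intros H. unfold C_star, a_prime. f_equal. field.
  pose proof (exp_pos 1). apply Rmult_neq_0_reg in H. lra.
Qed.

Theorem lemma5p1 (h r0 a1 a2 rho0 beta : R)
  (Hh : 0 < h) (Hr0 : 0 < r0) (Ha : a1 > Rabs a2) (Hrho0 : 0 < rho0)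
  (Hbeta0 : 0 < beta)
  (Hbeta1 : beta < (h ^ 2 + h * sqrt (h ^ 2 + r0 ^ 2))
                   / (r0 ^ 2 + h ^ 2 + h * sqrt (h ^ 2 + r0 ^ 2))) :
  forall k : nat, exists N0 : nat, forall n : nat, (n > N0)%nat ->
  forall P1 P2 : R * R,
    norm2 (fst P1 - fst P2, snd P1 - snd P2) = 4 * rho0 / INR n ->
    let rho := beta * rho0 / INR n in
    let x0 := DT0 h r0 (fst P1 - fst P2, snd P1 - snd P2) in
    let E := Ham h r0 a1 a2 x0 in
    let CE := exp (2 * E / ((a1 + a2) * A_const h r0)) in
    CE < C_star h r0 a1 a2 /\
    (exists x : R -> R * R, is_ham_solution h r0 a1 a2 x /\ x 0 = x0) /\
    (forall x : R -> R * R, is_ham_solution h r0 a1 a2 x -> x 0 = x0 ->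
       exists TE : R, 0 < TE /\ (forall t : R, x (t + TE) = x t) /\
         forall t : R, 0 <= t <= INR (S k) * TE ->
           norm2 (DT0inv h r0 (x t)) >= 4 * rho).
Proof.
  intros k.
  destruct (vortex_pair_constants h r0 a1 a2 beta Hh Hr0 Ha Hbeta0 Hbeta1) as [Hc [Hd Hgam]].
  set (c := (a1 + a2) * A_const h r0) in *. set (d := (a1 - a2) * B_const h r0) in *.
  set (gam := beta * C0 h r0 / c0 h r0) in *.
  assert (HK : 0 <= 10 * (d / c) * C0 h r0 * (4 * rho0)).
  { pose proof (c0_pos h r0). pose proof (c0_le_C0 h r0 Hh Hr0). pose proof (Rdiv_lt_0_compat d c Hd Hc).
    assert (0 < C0 h r0 * (4 * rho0)) by (apply Rmult_lt_0_compat; lra). nra. }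
  destruct (INR_inv_eventually_lt _ _ HK (Rmin_1_opp_ln_pos gam Hgam)) as [N0 HN0].
  exists N0. intros n Hn P1 P2 Hnorm rho x0 E CE. destruct (HN0 n Hn) as [Hn0 Hsmall].
  replace (10 * (d / c) * C0 h r0 * (4 * rho0) / INR n) with
    (10 * (d / c) * C0 h r0 * (4 * rho0 / INR n)) in Hsmall by (field; lra).
  assert (Hdelta : 0 < 4 * rho0 / INR n) by (apply Rdiv_lt_0_compat; lra).
  destruct (DT0_small_image h r0 Hh Hr0 (d / c) _ _ _ (Rdiv_lt_0_compat d c Hd Hc)
              Hdelta Hnorm Hsmall) as [Hx0 [Hlo Hx0_small]].
  destruct (small_orbit c d x0 gam Hc Hd Hgam Hx0 Hx0_small) as [HCE [Hex Hall]].
  split; [|split; [exact Hex|]].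
  - unfold CE, E, Ham. fold c d. rewrite C_star_eq by (fold d; lra). exact HCE.
  - intros y Hy Hy0. destruct (Hall y Hy Hy0) as [P [HP [Hper Hy_low]]].
    exists P. split; [exact HP| split; [exact Hper|]]. intros t _. apply Rle_ge.
    replace (4 * rho) with (beta * (4 * rho0 / INR n)) by (unfold rho; field; lra).
    apply (norm2_DT0inv_orbit_lower_bound h r0 Hh Hr0 _ _ x0); [lra| exact Hlo| apply Hy_low].
Qed.
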